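(* (Binary case.) Let $({\bf x}_i,y_i)$, $i=1,\dots,n$, with ${\bf x}_i\in\mathbb{R}^p$, $y_i\in\{\pm1\}$, and parameters $\lambda_1\ge0$, $\lambda_2>0$, $\lambda_3>0$, $\delta>0$. Let $F(b,{\bf w})=f(b,{\bf w})+g(b,{\bf w})$ with $f(b,{\bf w})=\frac1n\sum_i\phi_H(y_i(b+{\bf x}_i^\top{\bf w}))$ and $g(b,{\bf w})=\lambda_1\|{\bf w}\|_1+\frac{\lambda_2}{2}\|{\bf w}\|^2+\frac{\lambda_3}{2}b^2$, and let $L_f=\frac{1}{n\delta}\sum_i y_i^2(1+\|{\bf x}_i\|^2)$. Let $\{{\bf u}^k=(b^k;{\bf w}^k)\}$ be generated by the B-PGH scheme: ${\bf u}^{-1}={\bf u}^0$, $L_0\le L_f$, $\eta>1$; at step $k$, $\hat{\bf u}^{k-1}={\bf u}^{k-1}+\omega_{k-1}({\bf u}^{k-1}-{\bf u}^{k-2})$ with $0\le\omega_{k-1}\le\sqrt{L_{k-1}/L_k}$; $L_k=\min(\eta^{n_k}L_{k-1},L_f)$ with $n_k$ the smallest nonnegative integer such that $f(\mathrm{prox}_{g/L_k}({\bf v}^{k-1}))\le f(\hat{\bf u}^{k-1})+\langle\nabla f(\hat{\bf u}^{k-1}),\mathrm{prox}_{g/L_k}({\bf v}^{k-1})-\hat{\bf u}^{k-1}\rangle+\frac{L_k}{2}\|\mathrm{prox}_{g/L_k}({\bf v}^{k-1})-\hat{\bf u}^{k-1}\|^2$, where ${\bf v}^{k-1}=\hat{\bf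 u}^{k-1}-\frac{1}{L_k}\nabla f(\hat{\bf u}^{k-1})$; then $b^k=\frac{L_k\hat b^{k-1}-\nabla_b f(\hat{\bf u}^{k-1})}{L_k+\lambda_3}$, ${\bf w}^k=\frac{1}{L_k+\lambda_2}\mathcal{S}_{\lambda_1}(L_k\hat{\bf w}^{k-1}-\nabla_{\bf w}f(\hat{\bf u}^{k-1}))$; and if $F({\bf u}^k)>F({\bf u}^{k-1})$, ${\bf u}^k$ is recomputed with $\hat{\bf u}^{k-1}={\bf u}^{k-1}$. Then $\{{\bf u}^k\}$ converges R-linearly to the unique minimizer of $F$. (Multi-class case.) Let $y_i\in\{1,\dots,J\}$, $\lambda_1\ge0$, $\lambda_2,\lambda_3>0$, $\delta>0$, let $\ell_M({\bf b},\mathbf{W})=\frac1n\sum_{i}\sum_j a_{ij}\phi_H(b_j+{\bf x}_i^\top{\bf w}_j)$, $G({\bf b},\mathbf{W})=\lambda_1\|\mathbf{W}\|_1+\frac{\lambda_2}{2}\|\mathbf{W}\|_F^2+\frac{\lambda_3}{2}\|{\bf b}\|^2$, $\mathcal{U}=\{({\bf b},\mathbf{W}):\mathbf{W}{\bf e}=\mathbf{0},{\bf e}^\top{\bf b}=0\}$, and let $\{\mathbf{U}^k\}$ be generated by the analogous scheme (M-PGH) for $\min_{\mathbf{U}\in\mathcal{U}}\ell_M+G$, i.e. the iteration of the binary case with $f,g,L_f$ replaced by $\ell_M,G,L_m=\frac{J}{n\delta}\sum_i(1+\|{\bf x}_i\|^2)$ and each proximal step taken as the exact minimizer over $\mathcal{U}$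 of $\langle\nabla\ell_M(\hat{\mathbf{U}}^{k-1}),\mathbf{U}-\hat{\mathbf{U}}^{k-1}\rangle+\frac{L_k}{2}\|\mathbf{U}-\hat{\mathbf{U}}^{k-1}\|^2+G(\mathbf{U})$, with $0\le\omega_{k-1}\le\sqrt{L_{k-1}/L_k}$. Then $\{\mathbf{U}^k\}$ converges R-linearly to the unique minimizer of $\ell_M+G$ over $\mathcal{U}$.
   Context: $\phi_H$ is the huberized hinge loss: $\phi_H(t)=0$ for $t>1$, $\frac{(1-t)^2}{2\delta}$ for $1-\delta<t\le1$, $1-t-\frac\delta2$ for $t\le1-\delta$. $\mathcal{S}_\nu(t)=\mathrm{sign}(t)\max(|t|-\nu,0)$ componentwise. $\mathrm{prox}_h({\bf v})=\arg\min_{\bf u}\frac12\|{\bf u}-{\bf v}\|^2+h({\bf u})$. In the multi-class case $a_{ij}=1$ if $y_i\ne j$ and $0$ otherwise, ${\bf w}_j$ is the $j$-th column of $\mathbf{W}\in\mathbb{R}^{p\times J}$, $\|\mathbf{W}\|_1=\sum_{i,j}|w_{ij}|$, ${\bf e}$ is the all-ones vector. R-linear convergence means $\|{\bf u}^k-{\bf u}^*\|\le C\tau^k$ for some $C>0$, $\tau\in(0,1)$. *)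

From Stdlib Require Import Reals Lra Lia.
Open Scope R_scope.

Fixpoint sumn (m : nat) (f : nat -> R) : R :=
  match m with O => 0 | S m' => sumn m' f + f m' end.

(* a vector of R^p is a function nat -> R of which only indices < p matter *)
Definition vec := nat -> R.
(* a p x J matrix: W l j, row l < p, column j < J *)
Definition mat := nat -> nat -> R.

Definition dot (p : nat) (a b : vec) : R := sumn p (fun j => a j * b j).
Definition norm1 (p : nat) (a : vec) : R := sumn p (fun j => Rabs (a j)).

Definition phiH (delta t : R) : R :=
  if Rlt_dec 1 t then 0
  else if Rlt_dec (1 - delta) t then (1 - t) ^ 2 / (2 * delta)
  else 1 - t - delta / 2.

Definition dphiH (delta t : R) : R :=
  if Rlt_dec 1 t then 0
  else if Rlt_dec (1 - delta) t then (t - 1) / delta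
  else -1.

Definition Rsgn (t : R) : R :=
  if Rlt_dec 0 t then 1 else if Rlt_dec t 0 then -1 else 0.
Definition soft (nu t : R) : R := Rsgn t * Rmax (Rabs t - nu) 0.

Definition descent {S : Type} (sub : S -> S -> S) (ip : S -> S -> R)
  (f : S -> R) (gradf : S -> S) (L : R) (h z : S) : Prop :=
  f z <= f h + ip (gradf h) (sub z h) + L / 2 * ip (sub z h) (sub z h).

(* prox L h z : z is the proximal point at step size 1/L from extrapolated point h *)
Definition ls_ok {S : Type} (sub : S -> S -> S) (ip : S -> S -> R)
  (f : S -> R) (gradf : S -> S) (prox : R -> S -> S -> Prop) (h : S) (L : R) : Prop :=
  forall z, prox L h z -> descent sub ip f gradf L h z.

Definition backtrack (eta Lmax Lprev : R) (ok : R -> Prop) (L : R) : Prop :=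
  exists nk : nat,
    L = Rmin (eta ^ nk * Lprev) Lmax /\ ok L /\
    forall m : nat, (m < nk)%nat -> ~ ok (Rmin (eta ^ m * Lprev) Lmax).

(* One step k (from u^{k-1} to u^k):
   uprev2 = u^{k-2}, uprev = u^{k-1}, Lprev = L_{k-1}, om = omega_{k-1},
   L = L_k, u = u^k.  Either the extrapolated step does not increase F,
   or it does and u^k is recomputed (line search included) with hat u = u^{k-1}. *)
Definition pgh_step {S : Type} (sub add : S -> S -> S) (scal : R -> S -> S)
  (ip : S -> S -> R) (f : S -> R) (gradf : S -> S) (Fobj : S -> R)
  (prox : R -> S -> S -> Prop) (eta Lmax : R)
  (Lprev : R) (uprev2 uprev : S) (om : R) (L : R) (u : S) : Prop :=
  let hx := add uprev (scal om (sub uprev uprev2)) in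
  (0 <= om /\ om <= sqrt (Lprev / L) /\
   backtrack eta Lmax Lprev (ls_ok sub ip f gradf prox hx) L /\
   prox L hx u /\ Fobj u <= Fobj uprev)
  \/
  (exists (L' : R) (z' : S),
     0 <= om /\ om <= sqrt (Lprev / L') /\
     backtrack eta Lmax Lprev (ls_ok sub ip f gradf prox hx) L' /\
     prox L' hx z' /\ Fobj uprev < Fobj z' /\
     backtrack eta Lmax Lprev (ls_ok sub ip f gradf prox uprev) L /\
     prox L uprev u).

Definition Rlinear_to_unique_min {S : Type} (sub : S -> S -> S) (ip : S -> S -> R)
  (Fobj : S -> R) (feas : S -> Prop) (u : nat -> S) : Prop :=
  exists us : S,
    feas us /\ (forall v, feas v -> Fobj us <= Fobj v) /\
    (forall v, feas v -> Fobj v <= Fobj us -> ip (sub v us) (sub v us) = 0) /\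
    exists C tau : R, 0 < C /\ 0 < tau < 1 /\
      forall k : nat, sqrt (ip (sub (u k) us) (sub (u k) us)) <= C * tau ^ k.

Definition bstate := (R * vec)%type.
Definition bsub (u v : bstate) : bstate := (fst u - fst v, fun j => snd u j - snd v j).
Definition badd (u v : bstate) : bstate := (fst u + fst v, fun j => snd u j + snd v j).
Definition bscal (a : R) (u : bstate) : bstate := (a * fst u, fun j => a * snd u j).
Definition bip (p : nat) (u v : bstate) : R := fst u * fst v + dot p (snd u) (snd v).

Definition f_bin (n p : nat) (delta : R) (x : nat -> vec) (y : nat -> R) (u : bstate) : R :=
  / INR n * sumn n (fun i => phiH delta (y i * (fst u + dot p (x i) (snd u)))).

Definition g_bin (p : nat) (lam1 lam2 lam3 : R) (u : bstate) : R :=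
  lam1 * norm1 p (snd u) + lam2 / 2 * dot p (snd u) (snd u) + lam3 / 2 * fst u ^ 2.

Definition F_bin n p delta x y lam1 lam2 lam3 (u : bstate) : R :=
  f_bin n p delta x y u + g_bin p lam1 lam2 lam3 u.

Definition grad_bin (n p : nat) (delta : R) (x : nat -> vec) (y : nat -> R) (u : bstate) : bstate :=
  (/ INR n * sumn n (fun i => dphiH delta (y i * (fst u + dot p (x i) (snd u))) * y i),
   fun j => / INR n * sumn n (fun i =>
              dphiH delta (y i * (fst u + dot p (x i) (snd u))) * y i * x i j)).

Definition Lf_bin (n p : nat) (delta : R) (x : nat -> vec) (y : nat -> R) : R :=
  / (INR n * delta) * sumn n (fun i => y i ^ 2 * (1 + dot p (x i) (x i))).

(* closed-form proximal step prox_{g/L}(h - grad f(h)/L) *)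
Definition prox_bin (n p : nat) (delta : R) (x : nat -> vec) (y : nat -> R)
  (lam1 lam2 lam3 : R) (L : R) (h z : bstate) : Prop :=
  let gr := grad_bin n p delta x y h in
  z = ((L * fst h - fst gr) / (L + lam3),
       fun j => / (L + lam2) * soft lam1 (L * snd h j - snd gr j)).

Definition mstate := (vec * mat)%type.
Definition msub (u v : mstate) : mstate :=
  (fun j => fst u j - fst v j, fun l j => snd u l j - snd v l j).
Definition madd (u v : mstate) : mstate :=
  (fun j => fst u j + fst v j, fun l j => snd u l j + snd v l j).
Definition mscal (a : R) (u : mstate) : mstate :=
  (fun j => a * fst u j, fun l j => a * snd u l j).
Definition mip (p J : nat) (u v : mstate) : R :=
  dot J (fst u) (fst v) + sumn p (fun l => sumn J (fun j => snd u l j * snd v l j)).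

(* labels y i in {0,...,J-1}; a_ij = 1 if y_i <> j, 0 otherwise *)
Definition aij (y : nat -> nat) (i j : nat) : R := if Nat.eqb (y i) j then 0 else 1.

Definition mscore (p : nat) (x : nat -> vec) (u : mstate) (i j : nat) : R :=
  fst u j + sumn p (fun l => x i l * snd u l j).

Definition ellM (n p J : nat) (delta : R) (x : nat -> vec) (y : nat -> nat) (u : mstate) : R :=
  / INR n * sumn n (fun i => sumn J (fun j => aij y i j * phiH delta (mscore p x u i j))).

Definition GM (p J : nat) (lam1 lam2 lam3 : R) (u : mstate) : R :=
  lam1 * sumn p (fun l => sumn J (fun j => Rabs (snd u l j)))
  + lam2 / 2 * sumn p (fun l => sumn J (fun j => snd u l j ^ 2))
  + lam3 / 2 * dot J (fst u) (fst u).

Definition FM n p J delta x y lam1 lam2 lam3 (u : mstate) : R :=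
  ellM n p J delta x y u + GM p J lam1 lam2 lam3 u.

Definition grad_M (n p J : nat) (delta : R) (x : nat -> vec) (y : nat -> nat) (u : mstate) : mstate :=
  (fun j => / INR n * sumn n (fun i => aij y i j * dphiH delta (mscore p x u i j)),
   fun l j => / INR n * sumn n (fun i => aij y i j * dphiH delta (mscore p x u i j) * x i l)).

Definition Lm (n p J : nat) (delta : R) (x : nat -> vec) : R :=
  INR J / (INR n * delta) * sumn n (fun i => 1 + dot p (x i) (x i)).

Definition inU (p J : nat) (u : mstate) : Prop :=
  (forall l, (l < p)%nat -> sumn J (fun j => snd u l j) = 0) /\ sumn J (fst u) = 0.

Definition prox_M (n p J : nat) (delta : R) (x : nat -> vec) (y : nat -> nat)
  (lam1 lam2 lam3 : R) (L : R) (h z : mstate) : Prop :=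
  let Q := fun V => mip p J (grad_M n p J delta x y h) (msub V h)
                    + L / 2 * mip p J (msub V h) (msub V h) + GM p J lam1 lam2 lam3 V in
  inU p J z /\ forall V, inU p J V -> Q z <= Q V.

From Stdlib Require Import Reals Lra Lia Psatz.
Open Scope R_scope.

(* B-PGH and M-PGH are the same accelerated proximal gradient scheme with backtracking and
   restart, run in a finite-dimensional inner product space (for M-PGH, the subspace U) with a
   convex smooth part f and a part g that is strongly convex with modulus mu = min(lam2, lam3).
   Since the accepted step satisfies the descent inequality and z is a proximal point of an
   anchor h (the extrapolated point, or u_k after a restart) with L_(k+1) |u_k - h|^2 <=
   L_k |u_k - u_(k-1)|^2 (from omega^2 <= L_k / L_(k+1)), every step gives
     F(u_(k+1)) + (L_(k+1) + mu)/2 |u_(k+1) - u_k|^2 <= F(u_k) + L_k/2 |u_k - u_(k-1)|^2,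
     F(u_(k+1)) - inf F <= K (|u_(k+1) - u_k|^2 + |u_k - u_(k-1)|^2).
   Hence F(u_k) - inf F + L_k/2 |u_k - u_(k-1)|^2 decays geometrically; strong convexity turns
   the decay of F(u_k) - inf F into a geometric Cauchy bound, and the limit of the iterates is
   the unique minimizer. *)

(** * Finite sums *)

Lemma sumn_ext m f g : (forall j, (j < m)%nat -> f j = g j) -> sumn m f = sumn m g.
Proof.
  induction m as [|m IH]; intros Hfg; simpl; [reflexivity|].
  rewrite IH by (intros; apply Hfg; lia). rewrite (Hfg m) by lia. reflexivity.
Qed.

Lemma sumn_add m f g : sumn m (fun j => f j + g j) = sumn m f + sumn m g.
Proof. induction m as [|m IH]; simpl; [lra|]. rewrite IH. ring. Qed.

Lemma sumn_sub m f g : sumn m (fun j => f j - g j) = sumn m f - sumn m g.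
Proof. induction m as [|m IH]; simpl; [lra|]. rewrite IH. ring. Qed.

Lemma sumn_scal m c f : sumn m (fun j => c * f j) = c * sumn m f.
Proof. induction m as [|m IH]; simpl; [lra|]. rewrite IH. ring. Qed.

Lemma sumn_mulr m f c : sumn m f * c = sumn m (fun j => f j * c).
Proof. induction m as [|m IH]; simpl; [lra|]. rewrite <- IH. ring. Qed.

Lemma sumn_const m c : sumn m (fun _ => c) = INR m * c.
Proof. induction m as [|m IH]; simpl sumn; [simpl; lra|]. rewrite IH, S_INR. ring. Qed.

Lemma sumn_le m f g : (forall j, (j < m)%nat -> f j <= g j) -> sumn m f <= sumn m g.
Proof.
  induction m as [|m IH]; intros Hfg; simpl; [lra|].
  pose proof (Hfg m ltac:(lia)). enough (sumn m f <= sumn m g) by lra.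
  apply IH; intros; apply Hfg; lia.
Qed.

Lemma sumn_nonneg m f : (forall j, (j < m)%nat -> 0 <= f j) -> 0 <= sumn m f.
Proof.
  intros Hf. replace 0 with (sumn m (fun _ => 0)) by (rewrite sumn_const; ring).
  now apply sumn_le.
Qed.

Lemma sumn_term_le m f i : (forall j, (j < m)%nat -> 0 <= f j) -> (i < m)%nat -> f i <= sumn m f.
Proof.
  induction m as [|m IH]; intros Hf Hi; [lia|]. simpl.
  assert (0 <= sumn m f) by (apply sumn_nonneg; intros; apply Hf; lia).
  destruct (Nat.eq_dec i m) as [->|Him]; [lra|].
  assert (f i <= sumn m f) by (apply IH; [intros; apply Hf|]; lia).
  pose proof (Hf m ltac:(lia)). lra.
Qed.

Lemma sumn_abs m f : Rabs (sumn m f) <= sumn m (fun j => Rabs (f j)).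
Proof.
  induction m as [|m IH]; simpl; [rewrite Rabs_R0; lra|].
  eapply Rle_trans; [apply Rabs_triang | lra].
Qed.

Lemma sumn_swap m q (F : nat -> nat -> R) :
  sumn m (fun i => sumn q (fun j => F i j)) = sumn q (fun j => sumn m (fun i => F i j)).
Proof.
  induction m as [|m IH]; simpl.
  - rewrite sumn_const. ring.
  - rewrite IH, <- sumn_add. reflexivity.
Qed.

Lemma sumn_transpose n p (c : nat -> R) (X : nat -> nat -> R) (d : nat -> R) :
  sumn p (fun j => sumn n (fun i => c i * X i j) * d j)
  = sumn n (fun i => c i * sumn p (fun j => X i j * d j)).
Proof.
  rewrite (sumn_ext p _ (fun j => sumn n (fun i => c i * (X i j * d j))))
    by (intros; rewrite sumn_mulr; apply sumn_ext; intros; ring).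
  rewrite <- sumn_swap. apply sumn_ext. intros. apply sumn_scal.
Qed.

Lemma sumn2_add p J (F G : nat -> nat -> R) :
  sumn p (fun l => sumn J (fun j => F l j + G l j))
  = sumn p (fun l => sumn J (F l)) + sumn p (fun l => sumn J (G l)).
Proof. rewrite <- sumn_add. apply sumn_ext. intros. apply sumn_add. Qed.

Lemma sumn2_sub p J (F G : nat -> nat -> R) :
  sumn p (fun l => sumn J (fun j => F l j - G l j))
  = sumn p (fun l => sumn J (F l)) - sumn p (fun l => sumn J (G l)).
Proof. rewrite <- sumn_sub. apply sumn_ext. intros. apply sumn_sub. Qed.

Lemma sumn2_scal p J c (F : nat -> nat -> R) :
  sumn p (fun l => sumn J (fun j => c * F l j)) = c * sumn p (fun l => sumn J (F l)).
Proof. rewrite <- sumn_scal. apply sumn_ext. intros. apply sumn_scal. Qed.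

Lemma sumn2_ext p J (F G : nat -> nat -> R) : (forall l j, F l j = G l j) ->
  sumn p (fun l => sumn J (F l)) = sumn p (fun l => sumn J (G l)).
Proof. intros HFG. apply sumn_ext. intros. apply sumn_ext. intros. apply HFG. Qed.

Lemma sumn2_nonneg p J (F : nat -> nat -> R) : (forall l j, 0 <= F l j) ->
  0 <= sumn p (fun l => sumn J (F l)).
Proof. intros HF. apply sumn_nonneg. intros. apply sumn_nonneg. intros. apply HF. Qed.

Lemma dot_subl p a b c : dot p (fun j => a j - b j) c = dot p a c - dot p b c.
Proof. unfold dot. rewrite <- sumn_sub. apply sumn_ext. intros. ring. Qed.

Lemma dot_addl p a b c : dot p (fun j => a j + b j) c = dot p a c + dot p b c.
Proof. unfold dot. rewrite <- sumn_add. apply sumn_ext. intros. ring. Qed.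

Lemma dot_scall p t a c : dot p (fun j => t * a j) c = t * dot p a c.
Proof. unfold dot. rewrite <- sumn_scal. apply sumn_ext. intros. ring. Qed.

Lemma dot_sym p a b : dot p a b = dot p b a.
Proof. unfold dot. apply sumn_ext. intros. ring. Qed.

Lemma dot_self_ge0 p a : 0 <= dot p a a.
Proof. apply sumn_nonneg. intros. apply Rle_0_sqr. Qed.

Lemma dot_subr p a b c : dot p c (fun j => a j - b j) = dot p c a - dot p c b.
Proof. rewrite dot_sym, dot_subl, (dot_sym p a), (dot_sym p b). reflexivity. Qed.

(** * Real sequences *)

Lemma pow_le_pow_decr s k m : 0 <= s <= 1 -> (k <= m)%nat -> s ^ m <= s ^ k.
Proof.
  intros Hs Hkm. induction Hkm as [|m _ IH]; [lra|].
  simpl. pose proof (pow_le s m ltac:(lra)). nra.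
Qed.

Lemma geometric_eventually_lt s c eps : 0 <= s < 1 -> 0 < eps -> exists k, c * s ^ k < eps.
Proof.
  intros Hs Heps. pose proof (Rabs_pos c).
  destruct (pow_lt_1_zero s ltac:(rewrite Rabs_pos_eq; lra) (eps / (Rabs c + 1)))
    as [N HN]; [apply Rdiv_lt_0_compat; lra|].
  exists N. specialize (HN N (le_n N)). rewrite Rabs_pos_eq in HN by (apply pow_le; lra).
  pose proof (Rle_abs c). pose proof (pow_le s N ltac:(lra)).
  apply Rmult_lt_compat_l with (r := Rabs c + 1) in HN; [|lra].
  replace ((Rabs c + 1) * (eps / (Rabs c + 1))) with eps in HN by (field; lra).
  nra.
Qed.

Lemma le_of_geometric a b C s : 0 <= s < 1 -> (forall k, a <= b + C * s ^ k) -> a <= b.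
Proof.
  intros Hs Hab. apply Rle_plus_epsilon. intros eps Heps.
  destruct (geometric_eventually_lt s C eps Hs Heps) as [k Hk].
  specialize (Hab k). lra.
Qed.

Lemma le_of_forall_shrink X Y : (forall t, 0 < t < 1 -> (1 - t) * X <= Y) -> X <= Y.
Proof.
  intros H. destruct (Rle_dec X 0) as [HX|HX].
  - specialize (H (1/2) ltac:(lra)). lra.
  - apply Rle_plus_epsilon. intros eps Heps.
    set (t := Rmin (1/2) (eps / X)).
    assert (Ht : 0 < t < 1).
    { split; [apply Rmin_glb_lt; [lra| apply Rdiv_lt_0_compat; lra]|].
      pose proof (Rmin_l (1/2) (eps / X)). unfold t. lra. }
    assert (t * X <= eps).
    { apply Rle_trans with (eps / X * X); [apply Rmult_le_compat_r; [lra| apply Rmin_r]|].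
      right. field. lra. }
    specialize (H t Ht). lra.
Qed.

Lemma sqr_le_of_le_sqrt w q : 0 <= w -> 0 <= q -> w <= sqrt q -> w ^ 2 <= q.
Proof. intros Hw Hq Hwq. rewrite <- (pow2_sqrt q Hq). apply pow_incr. split; assumption. Qed.

Lemma sqrt_pow a k : 0 <= a -> sqrt (a ^ k) = sqrt a ^ k.
Proof.
  intros Ha. induction k as [|k IH]; simpl; [apply sqrt_1|].
  rewrite sqrt_mult_alt by exact Ha. rewrite IH. reflexivity.
Qed.

Lemma sqrt_geometric_bound (a : nat -> R) M s : 0 <= s ->
  (forall k, 0 <= a k <= M * s ^ k) -> forall k, sqrt (a k) <= (sqrt M + 1) * sqrt s ^ k.
Proof.
  intros Hs Ha k.
  assert (HM : 0 <= M) by (specialize (Ha 0%nat); simpl in Ha; lra).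
  apply Rle_trans with (sqrt (M * s ^ k)); [apply sqrt_le_1_alt, Ha|].
  rewrite sqrt_mult_alt, sqrt_pow by lra.
  apply Rmult_le_compat_r; [apply pow_le, sqrt_pos | lra].
Qed.

(* Two consecutive decrease steps pay for one error bound: (A + c) Phi_(k+2) <= A Phi_k. *)
Lemma lyapunov_R_linear (Phi D : nat -> R) (A c : R) : 0 < A -> 0 < c ->
  (forall k, 0 <= Phi k) -> (forall k, 0 <= D k) ->
  (forall k, Phi (S k) + c * D k <= Phi k) ->
  (forall k, Phi (S (S k)) <= A * (D (S k) + D k)) ->
  exists B sig, 0 <= B /\ 0 < sig < 1 /\ forall k, Phi k <= B * sig ^ k.
Proof.
  intros HA Hc HPhi HD Hdec Herr.
  set (rho := A / (A + c)).
  assert (Hrho : 0 < rho < 1).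
  { unfold rho. split; [apply Rdiv_lt_0_compat; lra|].
    apply Rmult_lt_reg_r with (A + c); [lra|]. field_simplify; lra. }
  assert (Hcontr : forall k, Phi (S (S k)) <= rho * Phi k).
  { intros k. pose proof (Hdec k). pose proof (Hdec (S k)). pose proof (Herr k).
    unfold rho. apply Rmult_le_reg_l with (A + c); [lra|].
    replace ((A + c) * (A / (A + c) * Phi k)) with (A * Phi k) by (field; lra). nra. }
  set (sig := sqrt rho).
  assert (Hsig : 0 < sig < 1).
  { unfold sig. split; [apply sqrt_lt_R0; lra|].
    rewrite <- sqrt_1. apply sqrt_lt_1_alt. lra. }
  assert (Hsig2 : sig * sig = rho) by (apply sqrt_sqrt; lra).
  exists (Phi 0%nat / sig), sig.
  assert (HB : Phi 0%nat <= Phi 0%nat / sig).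
  { apply Rmult_le_reg_r with sig; [lra|]. field_simplify; [|lra].
    pose proof (HPhi 0%nat). nra. }
  split; [pose proof (HPhi 0%nat); lra|]. split; [exact Hsig|].
  assert (Hpair : forall k, Phi k <= Phi 0%nat / sig * sig ^ k
                            /\ Phi (S k) <= Phi 0%nat / sig * sig ^ S k).
  { induction k as [|k [IH1 IH2]].
    - simpl. pose proof (Hdec 0%nat). split; [lra|].
      replace (Phi 0%nat / sig * (sig * 1)) with (Phi 0%nat) by (field; lra).
      pose proof (HD 0%nat). nra.
    - split; [exact IH2|]. pose proof (Hcontr k).
      replace (Phi 0%nat / sig * sig ^ S (S k)) with (rho * (Phi 0%nat / sig * sig ^ k))
        by (simpl; rewrite <- Hsig2; ring).
      pose proof (HPhi k). nra. }
  intros k. apply Hpair.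
Qed.

Lemma geometric_cauchy_limit (a : nat -> R) C tau : 0 <= tau < 1 ->
  (forall k m, (k <= m)%nat -> (a k - a m) * (a k - a m) <= C * tau ^ k) ->
  {l | forall k, (a k - l) * (a k - l) <= C * tau ^ k}.
Proof.
  intros Htau Ha.
  assert (HC : 0 <= C).
  { pose proof (Ha 0%nat 0%nat (le_n 0)) as H0. simpl in H0. lra. }
  assert (Hsq : forall k m, (k <= m)%nat -> Rabs (a k - a m) <= sqrt (C * tau ^ k)).
  { intros k m Hkm. rewrite <- sqrt_Rsqr_abs. apply sqrt_le_1_alt. apply Ha, Hkm. }
  assert (Hcau : Cauchy_crit a).
  { intros eps Heps. pose proof (Rsqr_pos_lt eps ltac:(lra)) as Heps2.
    destruct (geometric_eventually_lt tau C (Rsqr eps) Htau Heps2) as [N HN].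
    exists N. intros k m Hk Hm. unfold R_dist.
    assert (Hbound : forall k m, (N <= k <= m)%nat -> Rabs (a k - a m) < eps).
    { intros k' m' [Hk' Hkm']. apply Rsqr_incrst_0; [|apply Rabs_pos|lra].
      rewrite <- Rsqr_abs. unfold Rsqr at 1. eapply Rle_lt_trans; [apply Ha, Hkm'|].
      eapply Rle_lt_trans; [|exact HN].
      apply Rmult_le_compat_l; [exact HC|]. apply pow_le_pow_decr; [lra | exact Hk']. }
    destruct (Nat.le_ge_cases k m).
    - apply Hbound. lia.
    - rewrite Rabs_minus_sym. apply Hbound. lia. }
  destruct (R_complete a Hcau) as [l Hl]. exists l. intros k.
  assert (Habs : Rabs (a k - l) <= sqrt (C * tau ^ k)).
  { apply Rle_plus_epsilon. intros eps Heps.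
    destruct (Hl eps Heps) as [N HN]. specialize (HN (max N k) ltac:(lia)). unfold R_dist in HN.
    pose proof (Hsq k (max N k) ltac:(lia)).
    pose proof (Rabs_triang (a k - a (max N k)) (a (max N k) - l)).
    replace (a k - a (max N k) + (a (max N k) - l)) with (a k - l) in * by ring. lra. }
  assert (HCk : 0 <= C * tau ^ k) by (apply Rmult_le_pos; [exact HC | apply pow_le; lra]).
  pose proof (sqr_le_of_le_sqrt _ _ (Rabs_pos _) HCk Habs) as Hk.
  rewrite pow2_abs in Hk. nra.
Qed.

Lemma geometric_cauchy_limit_on {I : Type} (P : I -> bool) (a : nat -> I -> R) C tau :
  0 <= C -> 0 <= tau < 1 ->
  (forall i, P i = true -> forall k m, (k <= m)%nat ->
     (a k i - a m i) * (a k i - a m i) <= C * tau ^ k) ->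
  {l : I -> R | forall i, P i = true -> forall k,
     (a k i - l i) * (a k i - l i) <= C * tau ^ k}.
Proof.
  intros HC Htau Ha.
  set (b i k := if P i then a k i else 0).
  assert (Hb : forall i k m, (k <= m)%nat -> (b i k - b i m) * (b i k - b i m) <= C * tau ^ k).
  { intros i k m Hkm. unfold b. destruct (P i) eqn:Hi; [now apply Ha|].
    replace ((0 - 0) * (0 - 0)) with 0 by ring.
    apply Rmult_le_pos; [exact HC | apply pow_le; lra]. }
  exists (fun i => proj1_sig (geometric_cauchy_limit (b i) C tau Htau (Hb i))).
  intros i Hi k. destruct (geometric_cauchy_limit (b i) C tau Htau (Hb i)) as [l Hl]; simpl.
  specialize (Hl k). unfold b in Hl. rewrite Hi in Hl. exact Hl.
Qed.

Lemma sumn_zero_of_geometric_limit J (l : nat -> R) (a : nat -> nat -> R) C tau :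
  0 <= C -> 0 <= tau < 1 -> (forall k, sumn J (a k) = 0) ->
  (forall k j, (j < J)%nat -> (a k j - l j) * (a k j - l j) <= C * tau ^ k) ->
  sumn J l = 0.
Proof.
  intros HC Htau Hsum Hlim.
  enough (Rabs (sumn J l) <= 0) by (pose proof (Rabs_pos (sumn J l));
    destruct (Rcase_abs (sumn J l)); [rewrite Rabs_left in *|rewrite Rabs_pos_eq in *]; lra).
  apply (le_of_geometric _ _ (INR J * sqrt C) (sqrt tau)).
  { split; [apply sqrt_pos | rewrite <- sqrt_1; apply sqrt_lt_1_alt; lra]. }
  intros k.
  replace (sumn J l) with (- sumn J (fun j => a k j - l j)) by (rewrite sumn_sub, Hsum; ring).
  rewrite Rabs_Ropp. eapply Rle_trans; [apply sumn_abs|].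
  rewrite Rplus_0_l, Rmult_assoc, <- sumn_const. apply sumn_le. intros j Hj.
  rewrite <- sqrt_pow, <- sqrt_mult_alt by lra.
  rewrite <- sqrt_Rsqr_abs. apply sqrt_le_1_alt. apply Hlim, Hj.
Qed.

Lemma infimum_exists {T : Type} (C : T -> Prop) (phi : T -> R) (x0 : T) :
  C x0 -> (exists m, forall x, C x -> m <= phi x) ->
  exists inf, (forall x, C x -> inf <= phi x) /\
              (forall c, (forall x, C x -> c <= phi x) -> c <= inf).
Proof.
  intros Hx0 [m Hm].
  destruct (completeness (fun r => exists x, C x /\ r = - phi x)) as [s [Hub Hlub]].
  - exists (- m). intros r [x [Hx ->]]. specialize (Hm x Hx). lra.
  - exists (- phi x0). eauto.
  - exists (- s). split.
    + intros x Hx. enough (- phi x <= s) by lra. apply Hub. eauto.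
    + intros c Hc. enough (s <= - c) by lra.
      apply Hlub. intros r [x [Hx ->]]. specialize (Hc x Hx). lra.
Qed.

(** * Proximal gradient schemes in an inner product space *)

Class InnerProduct {V : Type} (sub add : V -> V -> V) (scal : R -> V -> V)
    (ip : V -> V -> R) : Prop := {
  inner_subl : forall a b c, ip (sub a b) c = ip a c - ip b c;
  inner_addl : forall a b c, ip (add a b) c = ip a c + ip b c;
  inner_scall : forall t a c, ip (scal t a) c = t * ip a c;
  inner_sym : forall a b, ip a b = ip b a;
  inner_self_ge0 : forall a, 0 <= ip a a }.

Section InnerProductSpace.
Context {V : Type} (sub add : V -> V -> V) (scal : R -> V -> V) (ip : V -> V -> R).
Context `{!InnerProduct sub add scal ip}.

Lemma ip_subl a b c : ip (sub a b) c = ip a c - ip b c.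
Proof. apply inner_subl. Qed.

Lemma ip_addl a b c : ip (add a b) c = ip a c + ip b c.
Proof. apply inner_addl. Qed.

Lemma ip_scall t a c : ip (scal t a) c = t * ip a c.
Proof. apply inner_scall. Qed.

Lemma ip_sym a b : ip a b = ip b a.
Proof. apply inner_sym. Qed.

Lemma ip_self_ge0 a : 0 <= ip a a.
Proof. apply inner_self_ge0. Qed.

Lemma ip_subr a b c : ip c (sub a b) = ip c a - ip c b.
Proof. rewrite ip_sym, ip_subl, (ip_sym a), (ip_sym b). reflexivity. Qed.

Lemma ip_addr a b c : ip c (add a b) = ip c a + ip c b.
Proof. rewrite ip_sym, ip_addl, (ip_sym a), (ip_sym b). reflexivity. Qed.

Lemma ip_scalr t a c : ip c (scal t a) = t * ip c a.
Proof. rewrite ip_sym, ip_scall, (ip_sym a). reflexivity. Qed.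

Ltac ip_expand :=
  repeat rewrite ?ip_subl, ?ip_addl, ?ip_scall, ?ip_subr, ?ip_addr, ?ip_scalr in *.

Definition sqdist (a b : V) : R := ip (sub a b) (sub a b).

Definition seg (z a : V) (t : R) : V := add z (scal t (sub a z)).

Lemma sqdist_ge0 a b : 0 <= sqdist a b.
Proof. exact (ip_self_ge0 (sub a b)). Qed.

Lemma sqdist_self a : sqdist a a = 0.
Proof. unfold sqdist. ip_expand. ring. Qed.

Lemma sqdist_sym a b : sqdist a b = sqdist b a.
Proof. unfold sqdist. ip_expand. ring. Qed.

Lemma sqdist_extrapolate u v w : sqdist u (add u (scal w (sub u v))) = w ^ 2 * sqdist u v.
Proof. unfold sqdist. ip_expand. rewrite (ip_sym u v). ring. Qed.

Lemma ip_young a b t : 0 < t -> 2 * Rabs (ip a b) <= t * ip a a + / t * ip b b.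
Proof.
  intros Ht.
  pose proof (ip_self_ge0 (sub (scal t a) b)) as Hm.
  pose proof (ip_self_ge0 (add (scal t a) b)) as Hp.
  ip_expand. rewrite (ip_sym b a) in Hm, Hp.
  apply Rmult_le_reg_l with t; [exact Ht|].
  replace (t * (t * ip a a + / t * ip b b)) with (t * t * ip a a + ip b b) by (field; lra).
  unfold Rabs. destruct (Rcase_abs (ip a b)); nra.
Qed.

Lemma sqdist_split x z h t : 0 < t ->
  sqdist x h <= (1 + t) * sqdist x z + (1 + / t) * sqdist z h.
Proof.
  intros Ht. pose proof (ip_young (sub x z) (sub z h) t Ht) as Hy.
  pose proof (Rle_abs (ip (sub x z) (sub z h))).
  assert (E : sqdist x h = sqdist x z + 2 * ip (sub x z) (sub z h) + sqdist z h).
  { unfold sqdist. ip_expand. rewrite (ip_sym z x), (ip_sym h x), (ip_sym h z). ring. }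
  unfold sqdist in *. lra.
Qed.

Lemma seg_combination s z a t :
  (1 - t) * ip s (sub z (seg z a t)) + t * ip s (sub a (seg z a t)) = 0 /\
  (1 - t) * sqdist z (seg z a t) + t * sqdist a (seg z a t) = t * (1 - t) * sqdist a z.
Proof.
  unfold sqdist, seg. split; ip_expand; [ring|].
  rewrite (ip_sym z a). ring.
Qed.

Definition convex_set (C : V -> Prop) : Prop :=
  forall z a t, C z -> C a -> 0 <= t <= 1 -> C (seg z a t).

Definition has_strong_subgradients (C : V -> Prop) (phi : V -> R) (c : R) : Prop :=
  forall y, C y -> exists s, forall x, C x ->
    phi y + ip s (sub x y) + c / 2 * sqdist x y <= phi x.

Lemma strong_subgradients_add C phi psi a b :
  has_strong_subgradients C phi a -> has_strong_subgradients C psi b ->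
  has_strong_subgradients C (fun x => phi x + psi x) (a + b).
Proof.
  intros Hphi Hpsi y Hy.
  destruct (Hphi y Hy) as [s1 Hs1]. destruct (Hpsi y Hy) as [s2 Hs2].
  exists (add s1 s2). intros x Hx. specialize (Hs1 x Hx). specialize (Hs2 x Hx).
  rewrite ip_addl. lra.
Qed.

Lemma quadratic_strong_subgradients C gr h L :
  has_strong_subgradients C (fun x => ip gr (sub x h) + L / 2 * sqdist x h) L.
Proof.
  intros y _. exists (add gr (scal L (sub y h))). intros x _.
  unfold sqdist. ip_expand.
  rewrite (ip_sym h x), (ip_sym h y), (ip_sym y x). lra.
Qed.

Lemma strongly_convex_seg C phi c z a t :
  convex_set C -> has_strong_subgradients C phi c -> C z -> C a -> 0 <= t <= 1 ->
  phi (seg z a t) + c / 2 * (t * (1 - t)) * sqdist a z <= (1 - t) * phi z + t * phi a.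
Proof.
  intros Hconv Hphi Hz Ha Ht.
  destruct (Hphi (seg z a t) (Hconv z a t Hz Ha Ht)) as [s Hs].
  pose proof (Hs z Hz) as Hsz. pose proof (Hs a Ha) as Hsa.
  destruct (seg_combination s z a t) as [E1 E2].
  set (x := seg z a t) in *.
  apply Rmult_le_compat_l with (r := 1 - t) in Hsz; [|lra].
  apply Rmult_le_compat_l with (r := t) in Hsa; [|lra].
  assert (E : (1 - t) * (phi x + ip s (sub z x) + c / 2 * sqdist z x)
              + t * (phi x + ip s (sub a x) + c / 2 * sqdist a x)
            = phi x + ((1 - t) * ip s (sub z x) + t * ip s (sub a x))
              + c / 2 * ((1 - t) * sqdist z x + t * sqdist a x)) by ring.
  rewrite E1, E2 in E. lra.
Qed.

Lemma min_quadratic_growth C Q c z :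
  convex_set C -> has_strong_subgradients C Q c -> C z -> (forall x, C x -> Q z <= Q x) ->
  forall a, C a -> Q z + c / 2 * sqdist a z <= Q a.
Proof.
  intros Hconv HQ Hz Hmin a Ha.
  enough (c / 2 * sqdist a z <= Q a - Q z) by lra.
  apply le_of_forall_shrink. intros t Ht.
  pose proof (Hmin _ (Hconv z a t Hz Ha ltac:(lra))) as Hle.
  pose proof (strongly_convex_seg C Q c z a t Hconv HQ Hz Ha ltac:(lra)) as Hseg.
  apply Rmult_le_reg_l with t; [lra|]. nra.
Qed.

Lemma midpoint_sqdist_le C phi c m x y :
  convex_set C -> has_strong_subgradients C phi c -> (forall v, C v -> m <= phi v) ->
  C x -> C y -> c / 4 * sqdist x y <= (phi x - m) + (phi y - m).
Proof.
  intros Hconv Hphi Hm Hx Hy.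
  pose proof (strongly_convex_seg C phi c x y (1/2) Hconv Hphi Hx Hy ltac:(lra)) as Hseg.
  pose proof (Hm _ (Hconv x y (1/2) Hx Hy ltac:(lra))).
  rewrite (sqdist_sym y x) in Hseg. lra.
Qed.

Definition geometrically_complete (C : V -> Prop) : Prop :=
  forall (v : nat -> V) K tau, 0 <= K -> 0 <= tau < 1 -> (forall k, C (v k)) ->
    (forall k m, (k <= m)%nat -> sqdist (v k) (v m) <= K * tau ^ k) ->
    exists l M, C l /\ forall k, sqdist (v k) l <= M * tau ^ k.

Definition prox_model (gradf : V -> V) (g : V -> R) (L : R) (h x : V) : R :=
  ip (gradf h) (sub x h) + L / 2 * sqdist x h + g x.

Lemma prox_model_three_point C gradf g mu L h z :
  convex_set C -> has_strong_subgradients C g mu -> C z ->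
  (forall x, C x -> prox_model gradf g L h z <= prox_model gradf g L h x) ->
  forall x, C x -> prox_model gradf g L h z + (L + mu) / 2 * sqdist x z
                   <= prox_model gradf g L h x.
Proof.
  intros Hconv Hg Hz Hmin. apply (min_quadratic_growth C (prox_model gradf g L h)); try assumption.
  apply strong_subgradients_add; [apply quadratic_strong_subgradients | exact Hg].
Qed.

Lemma backtrack_bounds eta Lmax Lprev ok L L0 :
  1 < eta -> 0 <= L0 -> L0 <= Lprev -> L0 <= Lmax -> backtrack eta Lmax Lprev ok L ->
  ok L /\ L0 <= L <= Lmax.
Proof.
  intros Heta HL0 Hprev Hmax [nk [-> [Hok _]]]. split; [exact Hok|].
  assert (1 <= eta ^ nk) by (apply pow_R1_Rle; lra).
  split; [|apply Rmin_r]. apply Rmin_glb; [nra | exact Hmax].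
Qed.

Section ProximalGradient.
Variables (f g Fobj : V -> R) (gradf : V -> V) (prox : R -> V -> V -> Prop) (feas : V -> Prop).
Variables (mu eta Lmax : R).
Hypothesis F_def : forall x, Fobj x = f x + g x.
Hypothesis f_convex : forall x h, f h + ip (gradf h) (sub x h) <= f x.
Hypothesis mu_pos : 0 < mu.
Hypothesis eta_gt1 : 1 < eta.
Hypothesis feas_convex : convex_set feas.
Hypothesis g_strong : has_strong_subgradients feas g mu.
Hypothesis prox_three_point : forall L h z, 0 < L -> prox L h z ->
  feas z /\ forall x, feas x ->
    prox_model gradf g L h z + (L + mu) / 2 * sqdist x z <= prox_model gradf g L h x.
Hypothesis F_bounded_below : exists m, forall x, feas x -> m <= Fobj x.
Hypothesis feas_complete : geometrically_complete feas.

Notation step := (pgh_step sub add scal ip f gradf Fobj prox eta Lmax).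

Lemma F_strong_subgradients : has_strong_subgradients feas Fobj mu.
Proof.
  intros y Hy. destruct (g_strong y Hy) as [s Hs].
  exists (add (gradf y) s). intros x Hx. specialize (Hs x Hx).
  pose proof (f_convex x y). rewrite ip_addl, !F_def. lra.
Qed.

Lemma prox_descent_bound L h z : 0 < L -> prox L h z -> descent sub ip f gradf L h z ->
  feas z /\ forall x, feas x -> Fobj z + (L + mu) / 2 * sqdist x z <= Fobj x + L / 2 * sqdist x h.
Proof.
  intros HL Hprox Hdesc. destruct (prox_three_point L h z HL Hprox) as [Hz H3]. split; [exact Hz|].
  intros x Hx. specialize (H3 x Hx). pose proof (f_convex x h).
  unfold prox_model, descent, sqdist in *. rewrite !F_def. lra.
Qed.

Lemma prox_error_bound L h z x : 0 < L -> prox L h z -> descent sub ip f gradf L h z -> feas x ->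
  Fobj z <= Fobj x + L * (L + mu) / (2 * mu) * sqdist z h.
Proof.
  intros HL Hprox Hdesc Hx.
  destruct (prox_descent_bound L h z HL Hprox Hdesc) as [_ Hbound]. specialize (Hbound x Hx).
  pose proof (sqdist_split x z h (mu / L) ltac:(apply Rdiv_lt_0_compat; lra)) as Hsplit.
  replace (/ (mu / L)) with (L / mu) in Hsplit by (field; lra).
  apply Rmult_le_compat_l with (r := L / 2) in Hsplit; [|lra].
  replace (L / 2 * ((1 + mu / L) * sqdist x z + (1 + L / mu) * sqdist z h))
    with ((L + mu) / 2 * sqdist x z + L * (L + mu) / (2 * mu) * sqdist z h) in Hsplit
    by (field; lra).
  lra.
Qed.

Lemma pgh_step_anchor L0 Lprev u2 u1 w L z : 0 < L0 -> L0 <= Lprev <= Lmax ->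
  step Lprev u2 u1 w L z ->
  L0 <= L <= Lmax /\ exists h, prox L h z /\ descent sub ip f gradf L h z /\
                                L * sqdist u1 h <= Lprev * sqdist u1 u2.
Proof.
  intros HL0 HLprev Hstep. pose proof (sqdist_ge0 u1 u2).
  destruct Hstep as [(Hw0 & Hw1 & Hbt & Hprox & _) | (L' & z' & _ & _ & _ & _ & _ & Hbt & Hprox)].
  - destruct (backtrack_bounds eta Lmax Lprev _ L L0 eta_gt1 ltac:(lra) ltac:(lra) ltac:(lra) Hbt)
      as [Hok HL].
    split; [exact HL|]. eexists. split; [exact Hprox|]. split; [exact (Hok _ Hprox)|].
    rewrite sqdist_extrapolate.
    assert (Hw2 : w ^ 2 <= Lprev / L).
    { apply sqr_le_of_le_sqrt; [exact Hw0 | | exact Hw1].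
      unfold Rdiv. apply Rmult_le_pos; [lra | apply Rlt_le, Rinv_0_lt_compat; lra]. }
    apply Rmult_le_compat_l with (r := L) in Hw2; [|lra].
    replace (L * (Lprev / L)) with Lprev in Hw2 by (field; lra). nra.
  - destruct (backtrack_bounds eta Lmax Lprev _ L L0 eta_gt1 ltac:(lra) ltac:(lra) ltac:(lra) Hbt)
      as [Hok HL].
    split; [exact HL|]. exists u1. split; [exact Hprox|]. split; [exact (Hok _ Hprox)|].
    rewrite sqdist_self. nra.
Qed.

Lemma pgh_step_sufficient_decrease L0 Lprev u2 u1 w L z : 0 < L0 -> L0 <= Lprev <= Lmax ->
  feas u1 -> step Lprev u2 u1 w L z ->
  feas z /\ Fobj z + (L + mu) / 2 * sqdist z u1 <= Fobj u1 + Lprev / 2 * sqdist u1 u2.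
Proof.
  intros HL0 HLprev Hu1 Hstep.
  destruct (pgh_step_anchor L0 Lprev u2 u1 w L z HL0 HLprev Hstep)
    as [HL [h (Hprox & Hdesc & Hanchor)]].
  destruct (prox_descent_bound L h z ltac:(lra) Hprox Hdesc) as [Hz Hbound].
  split; [exact Hz|]. specialize (Hbound u1 Hu1). rewrite sqdist_sym. lra.
Qed.

Lemma pgh_step_error_bound L0 Lprev u2 u1 w L z x : 0 < L0 -> L0 <= Lprev <= Lmax ->
  feas x -> step Lprev u2 u1 w L z ->
  Fobj z <= Fobj x + Lmax * (Lmax + mu) / mu * (Lmax / L0) * (sqdist z u1 + sqdist u1 u2).
Proof.
  intros HL0 HLprev Hx Hstep.
  destruct (pgh_step_anchor L0 Lprev u2 u1 w L z HL0 HLprev Hstep)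
    as [HL [h (Hprox & Hdesc & Hanchor)]].
  pose proof (prox_error_bound L h z x ltac:(lra) Hprox Hdesc Hx) as Herr.
  pose proof (sqdist_split z u1 h 1 ltac:(lra)) as Hsplit. rewrite Rinv_1 in Hsplit.
  pose proof (sqdist_ge0 z u1). pose proof (sqdist_ge0 u1 u2). pose proof (sqdist_ge0 u1 h).
  pose proof (sqdist_ge0 z h).
  assert (Hratio : 1 <= Lmax / L0).
  { apply Rmult_le_reg_r with L0; [lra|]. field_simplify; lra. }
  assert (Hu1h : sqdist u1 h <= Lmax / L0 * sqdist u1 u2).
  { apply Rmult_le_reg_l with L0; [lra|].
    replace (L0 * (Lmax / L0 * sqdist u1 u2)) with (Lmax * sqdist u1 u2) by (field; lra).
    nra. }
  set (c := Lmax * (Lmax + mu) / (2 * mu)).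
  assert (Hc : L * (L + mu) / (2 * mu) <= c).
  { unfold c. apply Rmult_le_compat_r; [apply Rlt_le, Rinv_0_lt_compat; lra | nra]. }
  assert (Hc0 : 0 <= c)
    by (unfold c; apply Rmult_le_pos; [nra | apply Rlt_le, Rinv_0_lt_compat; lra]).
  replace (Lmax * (Lmax + mu) / mu * (Lmax / L0)) with (2 * c * (Lmax / L0))
    by (unfold c; field; lra).
  assert (L * (L + mu) / (2 * mu) * sqdist z h <= c * sqdist z h)
    by (apply Rmult_le_compat_r; lra).
  assert (c * sqdist z h <= 2 * c * (Lmax / L0) * (sqdist z u1 + sqdist u1 u2)).
  { apply Rle_trans with (c * (2 * sqdist z u1 + 2 * (Lmax / L0 * sqdist u1 u2)));
      [apply Rmult_le_compat_l; lra|].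
    assert (0 <= c * sqdist z u1) by (apply Rmult_le_pos; lra). nra. }
  lra.
Qed.

Lemma sqdist_le_of_gap (v : nat -> V) Fs B sig :
  (forall x, feas x -> Fs <= Fobj x) -> (forall k, feas (v k)) -> 0 <= B -> 0 <= sig <= 1 ->
  (forall k, Fobj (v k) - Fs <= B * sig ^ k) ->
  forall k m, (k <= m)%nat -> sqdist (v k) (v m) <= 8 * B / mu * sig ^ k.
Proof.
  intros Fs_lower Hfeas HB Hsig Hgap k m Hkm.
  pose proof (midpoint_sqdist_le feas Fobj mu Fs (v k) (v m) feas_convex F_strong_subgradients
    Fs_lower (Hfeas k) (Hfeas m)) as Hmid.
  pose proof (Hgap k). pose proof (Hgap m). pose proof (pow_le_pow_decr sig k m Hsig Hkm).
  apply Rmult_le_reg_l with (mu / 4); [lra|].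
  replace (mu / 4 * (8 * B / mu * sig ^ k)) with (2 * B * sig ^ k) by (field; lra). nra.
Qed.

(* With a subgradient [s] at [us], [F us <= F (v k) - <s, v k - us>], and Young's inequality
   with weight [C r^k] bounds the inner product by [C r^k (|s|^2 + 1) / 2]. *)
Lemma limit_inf_attained (v : nat -> V) us Fs B C r :
  feas us -> (forall k, feas (v k)) -> 0 < C -> 0 < r < 1 ->
  (forall k, Fobj (v k) - Fs <= B * r ^ k) -> (forall k, sqrt (sqdist (v k) us) <= C * r ^ k) ->
  Fobj us <= Fs.
Proof.
  intros Hus Hfeas HC Hr Hgap Hrate. destruct (F_strong_subgradients us Hus) as [s Hs].
  apply (le_of_geometric _ _ (B + C * (ip s s + 1) / 2) r); [lra|]. intros k.
  set (t := C * r ^ k).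
  assert (Ht : 0 < t) by (unfold t; apply Rmult_lt_0_compat; [lra | apply pow_lt; lra]).
  assert (Hd : sqdist (v k) us <= t * t).
  { pose proof (sqdist_ge0 (v k) us). specialize (Hrate k). fold t in Hrate.
    rewrite <- (sqrt_sqrt (sqdist (v k) us)) by lra.
    pose proof (sqrt_pos (sqdist (v k) us)). nra. }
  assert (Hdt : / t * sqdist (v k) us <= t).
  { apply Rmult_le_reg_l with t; [lra|]. field_simplify; [|lra]. nra. }
  specialize (Hs (v k) (Hfeas k)). specialize (Hgap k).
  pose proof (ip_young s (sub (v k) us) t Ht) as Hy.
  pose proof (Rle_abs (- ip s (sub (v k) us))). rewrite Rabs_Ropp in *.
  pose proof (sqdist_ge0 (v k) us). pose proof (ip_self_ge0 s).
  unfold sqdist, t in *. nra.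
Qed.

Section Iterates.
Variables (u : nat -> V) (L om : nat -> R).
Hypothesis L0_pos : 0 < L 0%nat.
Hypothesis L0_le : L 0%nat <= Lmax.
Hypothesis u0_feas : feas (u 0%nat).
Hypothesis iterates_step :
  forall k, step (L k) (u (Nat.pred k)) (u k) (om k) (L (S k)) (u (S k)).

Lemma iterates_invariant k : L 0%nat <= L k <= Lmax /\ feas (u k).
Proof.
  induction k as [|k [HLk Huk]]; [split; [lra | exact u0_feas]|].
  destruct (pgh_step_anchor _ _ _ _ _ _ _ L0_pos HLk (iterates_step k)) as [HL _].
  destruct (pgh_step_sufficient_decrease _ _ _ _ _ _ _ L0_pos HLk Huk (iterates_step k))
    as [Hz _].
  split; assumption.
Qed.

Lemma iterates_gap_R_linear Fs :
  (forall v, feas v -> Fs <= Fobj v) ->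
  (forall c, (forall v, feas v -> c <= Fobj v) -> c <= Fs) ->
  exists B sig, 0 <= B /\ 0 < sig < 1 /\ forall k, Fobj (u k) - Fs <= B * sig ^ k.
Proof.
  intros Fs_lower Fs_greatest.
  set (K := Lmax * (Lmax + mu) / mu * (Lmax / L 0%nat)).
  assert (HK : 0 <= K).
  { unfold K. apply Rmult_le_pos; apply Rmult_le_pos; try nra;
      apply Rlt_le, Rinv_0_lt_compat; lra. }
  set (Phi k := Fobj (u k) - Fs + L k / 2 * sqdist (u k) (u (Nat.pred k))).
  set (D k := sqdist (u (S k)) (u k)).
  assert (Hgap : forall k, Fobj (u k) - Fs <= Phi k).
  { intros k. unfold Phi. pose proof (sqdist_ge0 (u k) (u (Nat.pred k))).
    destruct (iterates_invariant k). nra. }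
  destruct (lyapunov_R_linear Phi D (K + Lmax / 2) (mu / 2)) as (B & sig & HB & Hsig & HPhi).
  - lra.
  - lra.
  - intros k. pose proof (Hgap k). destruct (iterates_invariant k) as [_ Huk].
    pose proof (Fs_lower _ Huk). lra.
  - intros k. apply sqdist_ge0.
  - intros k. destruct (iterates_invariant k) as [HLk Huk].
    destruct (pgh_step_sufficient_decrease _ _ _ _ _ _ _ L0_pos HLk Huk (iterates_step k))
      as [_ Hdec].
    unfold Phi, D. simpl Nat.pred. lra.
  - intros k. destruct (iterates_invariant (S k)) as [HLk _].
    destruct (iterates_invariant (S (S k))) as [HLkk _].
    assert (Herr : Fobj (u (S (S k))) - K * (D (S k) + D k) <= Fs).
    { apply Fs_greatest. intros v Hv.
      pose proof (pgh_step_error_bound _ _ _ _ _ _ _ v L0_pos HLk Hv (iterates_step (S k)))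
        as Hbound.
      simpl Nat.pred in Hbound. fold K in Hbound. unfold D. lra. }
    pose proof (sqdist_ge0 (u (S (S k))) (u (S k))). pose proof (sqdist_ge0 (u (S k)) (u k)).
    unfold Phi, D in *. simpl Nat.pred. nra.
  - exists B, sig. split; [exact HB|]. split; [exact Hsig|].
    intros k. specialize (HPhi k). specialize (Hgap k). lra.
Qed.

Theorem pgh_R_linear_convergence : Rlinear_to_unique_min sub ip Fobj feas u.
Proof.
  destruct (infimum_exists feas Fobj (u 0%nat) u0_feas F_bounded_below)
    as [Fs [Fs_lower Fs_greatest]].
  destruct (iterates_gap_R_linear Fs Fs_lower Fs_greatest) as (B & sig & HB & Hsig & Hgap).
  pose proof (fun k => proj2 (iterates_invariant k)) as Hfeas.
  destruct (feas_complete u (8 * B / mu) sig) as (us & M & Hus & Hlim).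
  { apply Rmult_le_pos; [lra | apply Rlt_le, Rinv_0_lt_compat; lra]. }
  { lra. }
  { exact Hfeas. }
  { apply (sqdist_le_of_gap u Fs B sig); try assumption. lra. }
  set (r := sqrt sig). set (C := sqrt M + 1).
  assert (Hr : 0 < r < 1).
  { unfold r. split; [apply sqrt_lt_R0; lra|]. rewrite <- sqrt_1. apply sqrt_lt_1_alt. lra. }
  assert (HC : 0 < C) by (unfold C; pose proof (sqrt_pos M); lra).
  assert (Hrate : forall k, sqrt (sqdist (u k) us) <= C * r ^ k)
    by (apply sqrt_geometric_bound; [lra | intros k; split; [apply sqdist_ge0 | apply Hlim]]).
  assert (Hgap_r : forall k, Fobj (u k) - Fs <= B * r ^ k).
  { intros k. apply Rle_trans with (B * sig ^ k); [apply Hgap|].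
    apply Rmult_le_compat_l; [exact HB|]. apply pow_incr.
    assert (r * r = sig) by (apply sqrt_sqrt; lra). split; nra. }
  assert (Hmin : Fobj us <= Fs) by (apply (limit_inf_attained u us Fs B C r); assumption).
  exists us. split; [exact Hus|]. split.
  { intros v Hv. specialize (Fs_lower v Hv). lra. }
  split.
  - intros v Hv Hle.
    pose proof (midpoint_sqdist_le feas Fobj mu Fs v us feas_convex F_strong_subgradients
      Fs_lower Hv Hus).
    pose proof (Fs_lower v Hv). pose proof (sqdist_ge0 v us). unfold sqdist in *. nra.
  - exists C, r. split; [exact HC|]. split; [exact Hr|]. exact Hrate.
Qed.

End Iterates.
End ProximalGradient.
End InnerProductSpace.

(** * The huberized hinge loss and the elastic net *)

Lemma phiH_nonneg delta t : 0 < delta -> 0 <= phiH delta t.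
Proof.
  intros Hd. unfold phiH. destruct (Rlt_dec 1 t); [lra|].
  destruct (Rlt_dec (1 - delta) t); [|lra].
  apply Rmult_le_pos; [nra | apply Rlt_le, Rinv_0_lt_compat; lra].
Qed.

Lemma phiH_convex delta s t : 0 < delta -> phiH delta t + dphiH delta t * (s - t) <= phiH delta s.
Proof.
  intros Hd. unfold phiH, dphiH.
  assert (Hinv : 0 < / delta) by (apply Rinv_0_lt_compat; lra).
  assert (E1 : forall a, a / (2 * delta) = a * / delta / 2) by (intros; field; lra).
  assert (E2 : forall a, a / delta = a * / delta) by (intros; field; lra).
  rewrite !E1, !E2.
  assert (Hi : delta * / delta = 1) by (field; lra).
  set (i := / delta) in *. clearbody i.
  destruct (Rlt_dec 1 t); destruct (Rlt_dec 1 s); try destruct (Rlt_dec (1 - delta) s);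
    try destruct (Rlt_dec (1 - delta) t); try nra.
  - assert (0 <= (1 - t) * i) by nra. nra.
  - assert (0 <= (s - t) ^ 2 * i) by (apply Rmult_le_pos; [apply pow2_ge_0 | lra]).
    replace ((1 - s) ^ 2 * i / 2)
      with ((1 - t) ^ 2 * i / 2 + (t - 1) * i * (s - t) + (s - t) ^ 2 * i / 2) by field.
    lra.
  - apply Rmult_le_reg_l with delta; [lra|].
    replace (delta * ((1 - t) ^ 2 * i / 2 + (t - 1) * i * (s - t)))
      with (delta * i * ((1 - t) ^ 2 / 2 + (t - 1) * (s - t))) by field.
    rewrite Hi, Rmult_1_l.
    assert (0 <= (delta - (1 - t)) * ((1 - s) - (delta + (1 - t)) / 2))
      by (apply Rmult_le_pos; lra).
    nra.
Qed.

Lemma soft_0 t : soft 0 t = t.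
Proof.
  unfold soft, Rsgn, Rmax. rewrite Rminus_0_r.
  destruct (Rlt_dec 0 t).
  - rewrite Rabs_pos_eq by lra. destruct (Rle_dec t 0); lra.
  - destruct (Rlt_dec t 0).
    + rewrite Rabs_left by lra. destruct (Rle_dec (- t) 0); lra.
    + destruct (Rle_dec (Rabs t) 0); lra.
Qed.

Lemma soft_cases nu A : 0 <= nu ->
  (nu < A /\ soft nu A = A - nu) \/ (A < - nu /\ soft nu A = A + nu) \/
  (- nu <= A <= nu /\ soft nu A = 0).
Proof.
  intros Hnu. unfold soft, Rsgn, Rmax.
  destruct (Rlt_dec 0 A).
  - rewrite Rabs_pos_eq by lra. destruct (Rle_dec (A - nu) 0); [right; right | left]; lra.
  - destruct (Rlt_dec A 0).
    + rewrite Rabs_left by lra.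
      destruct (Rle_dec (- A - nu) 0); [right; right | right; left]; lra.
    + right; right. split; [lra | ring].
Qed.

(* Scalar proximal inequality behind the closed-form B-PGH update: the soft-thresholded point
   [z0] minimises [g0 (a - h0) + L/2 (a - h0)^2 + lam1 |a| + lam2/2 a^2] with quadratic growth. *)
Lemma soft_threshold_three_point L lam1 lam2 mu g0 h0 a0 z0 :
  0 < L -> 0 <= lam1 -> 0 < lam2 -> mu <= lam2 ->
  z0 = / (L + lam2) * soft lam1 (L * h0 - g0) ->
  g0 * (z0 - h0) + L / 2 * ((z0 - h0) * (z0 - h0)) + (lam1 * Rabs z0 + lam2 / 2 * (z0 * z0))
    + (L + mu) / 2 * ((a0 - z0) * (a0 - z0))
  <= g0 * (a0 - h0) + L / 2 * ((a0 - h0) * (a0 - h0)) + (lam1 * Rabs a0 + lam2 / 2 * (a0 * a0)).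
Proof.
  intros HL H1 H2 Hmu Hz.
  set (A := L * h0 - g0) in *. set (c := L + lam2) in *.
  assert (Hcz : c * z0 = soft lam1 A) by (rewrite Hz; unfold c; field; lra).
  assert (Hopt : 0 <= (c * z0 - A) * (a0 - z0) + lam1 * (Rabs a0 - Rabs z0)).
  { pose proof (Rle_abs a0). pose proof (Rle_abs (- a0)). rewrite Rabs_Ropp in *.
    destruct (soft_cases lam1 A H1) as [[HA Hs]|[[HA Hs]|[HA Hs]]]; rewrite Hcz, Hs.
    - assert (0 < z0) by (apply Rmult_lt_reg_l with c; unfold c in *; lra).
      rewrite (Rabs_pos_eq z0) by lra. nra.
    - assert (z0 < 0) by (apply Rmult_lt_reg_l with c; unfold c in *; lra).
      rewrite (Rabs_left z0) by lra. nra.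
    - assert (z0 = 0) as -> by (apply Rmult_eq_reg_l with c; unfold c in *; lra).
      rewrite Rabs_R0. destruct (Rle_dec 0 a0).
      + rewrite Rabs_pos_eq by lra. nra.
      + rewrite Rabs_left by lra. nra. }
  assert (0 <= (lam2 - mu) / 2 * ((a0 - z0) * (a0 - z0)))
    by (apply Rmult_le_pos; [lra | apply Rle_0_sqr]).
  unfold A, c in *. nra.
Qed.

Lemma elastic_net_strong_subgradient lam1 lam2 mu y0 a0 : 0 <= lam1 -> mu <= lam2 ->
  (lam1 * Rabs y0 + lam2 / 2 * (y0 * y0)) + (lam1 * Rsgn y0 + lam2 * y0) * (a0 - y0)
    + mu / 2 * ((a0 - y0) * (a0 - y0))
  <= lam1 * Rabs a0 + lam2 / 2 * (a0 * a0).
Proof.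
  intros H1 H2.
  assert (Hsgn : Rsgn y0 * y0 = Rabs y0 /\ Rsgn y0 * a0 <= Rabs a0).
  { pose proof (Rle_abs a0). pose proof (Rle_abs (- a0)). rewrite Rabs_Ropp in *.
    unfold Rsgn. destruct (Rlt_dec 0 y0); [rewrite Rabs_pos_eq by lra; lra|].
    destruct (Rlt_dec y0 0); [rewrite Rabs_left by lra; lra|].
    replace y0 with 0 by lra. rewrite Rabs_R0. pose proof (Rabs_pos a0). lra. }
  destruct Hsgn as [E1 E2].
  assert (0 <= (lam2 - mu) / 2 * ((a0 - y0) * (a0 - y0)))
    by (apply Rmult_le_pos; [lra | apply Rle_0_sqr]).
  assert (lam1 * (Rsgn y0 * a0) <= lam1 * Rabs a0) by (apply Rmult_le_compat_l; lra).
  nra.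
Qed.

(** * Binary classification *)

#[export] Instance bip_inner_product p : InnerProduct bsub badd bscal (bip p).
Proof.
  split; intros; unfold bip, bsub, badd, bscal; simpl.
  - rewrite dot_subl. ring.
  - rewrite dot_addl. ring.
  - rewrite dot_scall. ring.
  - rewrite dot_sym. ring.
  - pose proof (dot_self_ge0 p (snd a)). nra.
Qed.

Lemma bip_grad_bin n p delta x y h d :
  bip p (grad_bin n p delta x y h) d =
  / INR n * sumn n (fun i => dphiH delta (y i * (fst h + dot p (x i) (snd h))) *
                             (y i * (fst d + dot p (x i) (snd d)))).
Proof.
  unfold bip, grad_bin, dot; simpl.
  set (c i := dphiH delta (y i * (fst h + sumn p (fun j => x i j * snd h j))) * y i).
  rewrite (sumn_ext p _ (fun j => / INR n * (sumn n (fun i => c i * x i j) * snd d j)))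
    by (intros; unfold c; ring).
  rewrite sumn_scal, sumn_transpose.
  transitivity (/ INR n * sumn n (fun i => c i * fst d + c i * sumn p (fun j => x i j * snd d j))).
  - rewrite sumn_add, <- sumn_mulr. ring.
  - f_equal. apply sumn_ext. intros. unfold c. ring.
Qed.

Lemma f_bin_convex n p delta x y a h : (1 <= n)%nat -> 0 < delta ->
  f_bin n p delta x y h + bip p (grad_bin n p delta x y h) (bsub a h) <= f_bin n p delta x y a.
Proof.
  intros Hn Hd. rewrite bip_grad_bin. unfold f_bin.
  rewrite <- Rmult_plus_distr_l, <- sumn_add.
  apply Rmult_le_compat_l; [apply Rlt_le, Rinv_0_lt_compat, lt_0_INR; lia|].
  apply sumn_le. intros i _. simpl. rewrite dot_subr.
  set (sa := y i * (fst a + dot p (x i) (snd a))).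
  set (sh := y i * (fst h + dot p (x i) (snd h))).
  replace (y i * (fst a - fst h + (dot p (x i) (snd a) - dot p (x i) (snd h)))) with (sa - sh)
    by (unfold sa, sh; ring).
  apply phiH_convex. exact Hd.
Qed.

Lemma g_bin_strong_subgradients p lam1 lam2 lam3 mu : 0 <= lam1 -> mu <= lam2 -> mu <= lam3 ->
  has_strong_subgradients bsub (bip p) (fun _ => True) (g_bin p lam1 lam2 lam3) mu.
Proof.
  intros H1 H2 H3 v _.
  exists (lam3 * fst v, fun j => lam1 * Rsgn (snd v j) + lam2 * snd v j). intros a _.
  pose proof (elastic_net_strong_subgradient 0 lam3 mu (fst v) (fst a) ltac:(lra) H3) as Hb.
  assert (Hw : 0 <= sumn p (fun j => lam1 * Rabs (snd a j) + lam2 / 2 * (snd a j * snd a j)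
      - ((lam1 * Rabs (snd v j) + lam2 / 2 * (snd v j * snd v j))
         + (lam1 * Rsgn (snd v j) + lam2 * snd v j) * (snd a j - snd v j)
         + mu / 2 * ((snd a j - snd v j) * (snd a j - snd v j))))).
  { apply sumn_nonneg. intros j _.
    pose proof (elastic_net_strong_subgradient lam1 lam2 mu (snd v j) (snd a j) H1 H2). lra. }
  repeat rewrite ?sumn_sub, ?sumn_add, ?sumn_scal in Hw.
  unfold sqdist, bip, g_bin, norm1, dot, bsub; simpl. nra.
Qed.

Lemma prox_bin_three_point n p delta x y lam1 lam2 lam3 mu L h z a :
  0 < L -> 0 <= lam1 -> 0 < lam2 -> 0 < lam3 -> mu <= lam2 -> mu <= lam3 ->
  prox_bin n p delta x y lam1 lam2 lam3 L h z ->
  prox_model bsub (bip p) (grad_bin n p delta x y) (g_bin p lam1 lam2 lam3) L h z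
    + (L + mu) / 2 * sqdist bsub (bip p) a z
  <= prox_model bsub (bip p) (grad_bin n p delta x y) (g_bin p lam1 lam2 lam3) L h a.
Proof.
  intros HL H1 H2 H3 Hm2 Hm3 Hprox. unfold prox_bin in Hprox. cbv zeta in Hprox.
  unfold prox_model, sqdist, bip, g_bin, norm1, dot, bsub. cbn [fst snd].
  set (gr := grad_bin n p delta x y h) in *.
  assert (Hzb : fst z = / (L + lam3) * soft 0 (L * fst h - fst gr)).
  { rewrite Hprox, soft_0. cbn [fst]. field. lra. }
  pose proof (soft_threshold_three_point L 0 lam3 mu (fst gr) (fst h) (fst a) (fst z)
                HL (Rle_refl 0) H3 Hm3 Hzb) as Hb.
  assert (Hw : 0 <= sumn p (fun j =>
     (snd gr j * (snd a j - snd h j) + L / 2 * ((snd a j - snd h j) * (snd a j - snd h j))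
       + (lam1 * Rabs (snd a j) + lam2 / 2 * (snd a j * snd a j)))
     - (snd gr j * (snd z j - snd h j) + L / 2 * ((snd z j - snd h j) * (snd z j - snd h j))
       + (lam1 * Rabs (snd z j) + lam2 / 2 * (snd z j * snd z j))
       + (L + mu) / 2 * ((snd a j - snd z j) * (snd a j - snd z j))))).
  { apply sumn_nonneg. intros j _.
    pose proof (soft_threshold_three_point L lam1 lam2 mu (snd gr j) (snd h j) (snd a j)
      (snd z j) HL H1 H2 Hm2 ltac:(rewrite Hprox; reflexivity)). lra. }
  repeat rewrite ?sumn_sub, ?sumn_add, ?sumn_scal in Hw.
  lra.
Qed.

Lemma F_bin_nonneg n p delta x y lam1 lam2 lam3 a :
  (1 <= n)%nat -> 0 < delta -> 0 <= lam1 -> 0 < lam2 -> 0 < lam3 ->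
  0 <= F_bin n p delta x y lam1 lam2 lam3 a.
Proof.
  intros Hn Hd H1 H2 H3. unfold F_bin, f_bin, g_bin.
  assert (0 <= sumn n (fun i => phiH delta (y i * (fst a + dot p (x i) (snd a)))))
    by (apply sumn_nonneg; intros; apply phiH_nonneg; exact Hd).
  assert (0 <= norm1 p (snd a)) by (apply sumn_nonneg; intros; apply Rabs_pos).
  pose proof (dot_self_ge0 p (snd a)). pose proof (pow2_ge_0 (fst a)).
  assert (0 < / INR n) by (apply Rinv_0_lt_compat, lt_0_INR; lia).
  assert (0 <= / INR n * sumn n (fun i => phiH delta (y i * (fst a + dot p (x i) (snd a)))))
    by (apply Rmult_le_pos; lra).
  assert (0 <= lam1 * norm1 p (snd a)) by (apply Rmult_le_pos; lra).
  nra.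
Qed.

Lemma bip_geometrically_complete p :
  geometrically_complete bsub (bip p) (fun _ => True).
Proof.
  intros v K tau HK Htau _ Hv.
  assert (Hcoord : forall d, fst d * fst d <= bip p d d /\
                             forall j, (j < p)%nat -> snd d j * snd d j <= bip p d d).
  { intros d. pose proof (dot_self_ge0 p (snd d)) as Hd. pose proof (Rle_0_sqr (fst d)).
    unfold bip, dot, Rsqr in *. split; [lra|]. intros j Hj.
    pose proof (sumn_term_le p (fun j => snd d j * snd d j) j
                  ltac:(intros; apply Rle_0_sqr) Hj). lra. }
  destruct (geometric_cauchy_limit (fun k => fst (v k)) K tau Htau) as [lb Hlb].
  { intros k m Hkm. eapply Rle_trans; [apply (Hcoord (bsub (v k) (v m))) | apply Hv, Hkm]. }
  destruct (geometric_cauchy_limit_on (fun j => Nat.ltb j p) (fun k => snd (v k)) K tau HK Htau)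
    as [lw Hlw].
  { intros j Hj k m Hkm. apply Nat.ltb_lt in Hj.
    eapply Rle_trans; [apply (Hcoord (bsub (v k) (v m))), Hj | apply Hv, Hkm]. }
  exists (lb, lw), ((1 + INR p) * K). split; [exact I|]. intros k.
  unfold sqdist, bip, bsub, dot; simpl.
  assert (Hw : sumn p (fun j => (snd (v k) j - lw j) * (snd (v k) j - lw j))
               <= sumn p (fun _ => K * tau ^ k)).
  { apply sumn_le. intros j Hj. apply Hlw. now apply Nat.ltb_lt. }
  rewrite sumn_const in Hw. specialize (Hlb k). simpl in Hlb. lra.
Qed.

Lemma bpgh_R_linear_convergence (n p : nat) (x : nat -> vec) (y : nat -> R)
    (lam1 lam2 lam3 delta eta : R) (u : nat -> bstate) (L om : nat -> R) :
  (1 <= n)%nat -> 0 <= lam1 -> 0 < lam2 -> 0 < lam3 -> 0 < delta -> 1 < eta ->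
  0 < L 0%nat -> L 0%nat <= Lf_bin n p delta x y ->
  (forall k : nat,
     pgh_step bsub badd bscal (bip p) (f_bin n p delta x y)
       (grad_bin n p delta x y) (F_bin n p delta x y lam1 lam2 lam3)
       (prox_bin n p delta x y lam1 lam2 lam3) eta (Lf_bin n p delta x y)
       (L k) (u (Nat.pred k)) (u k) (om k) (L (S k)) (u (S k))) ->
  Rlinear_to_unique_min bsub (bip p) (F_bin n p delta x y lam1 lam2 lam3) (fun _ => True) u.
Proof.
  intros Hn H1 H2 H3 Hd Heta HL0 HLmax Hstep.
  pose proof (Rmin_l lam2 lam3). pose proof (Rmin_r lam2 lam3).
  assert (Hmu : 0 < Rmin lam2 lam3) by (apply Rmin_glb_lt; assumption).
  apply (pgh_R_linear_convergence bsub badd bscal (bip p) (f_bin n p delta x y)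
    (g_bin p lam1 lam2 lam3) _ (grad_bin n p delta x y) (prox_bin n p delta x y lam1 lam2 lam3)
    (fun _ => True) (Rmin lam2 lam3) eta (Lf_bin n p delta x y)) with (L := L) (om := om);
    auto.
  - intros a h. apply f_bin_convex; assumption.
  - intros z a t _ _ _. exact I.
  - apply g_bin_strong_subgradients; assumption.
  - intros L' h z HL' Hprox. split; [exact I|]. intros a _.
    apply (prox_bin_three_point n p delta x y lam1 lam2 lam3); assumption.
  - exists 0. intros a _. apply F_bin_nonneg; assumption.
  - apply bip_geometrically_complete.
Qed.

(** * Multi-class classification *)

#[export] Instance mip_inner_product p J : InnerProduct msub madd mscal (mip p J).
Proof.
  split; intros; unfold mip, msub, madd, mscal; cbn [fst snd].
  - rewrite dot_subl, (sumn2_ext p J _ (fun l j => snd a l j * snd c l j - snd b l j * snd c l j))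
      by (intros; ring).
    rewrite sumn2_sub. ring.
  - rewrite dot_addl, (sumn2_ext p J _ (fun l j => snd a l j * snd c l j + snd b l j * snd c l j))
      by (intros; ring).
    rewrite sumn2_add. ring.
  - rewrite dot_scall, (sumn2_ext p J _ (fun l j => t * (snd a l j * snd c l j))) by (intros; ring).
    rewrite sumn2_scal. ring.
  - rewrite dot_sym, (sumn2_ext p J _ (fun l j => snd b l j * snd a l j)) by (intros; ring).
    reflexivity.
  - pose proof (dot_self_ge0 J (fst a)).
    pose proof (sumn2_nonneg p J (fun l j => snd a l j * snd a l j) (fun l j => Rle_0_sqr _)).
    lra.
Qed.

Lemma sumn_score_adjoint n p J (T : nat -> nat -> R) (x : nat -> vec) (db : vec) (dW : mat) :
  sumn J (fun j => / INR n * sumn n (fun i => T i j) * db j) +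
  sumn p (fun l => sumn J (fun j => / INR n * sumn n (fun i => T i j * x i l) * dW l j))
  = / INR n * sumn n (fun i => sumn J (fun j => T i j * (db j + sumn p (fun l => x i l * dW l j)))).
Proof.
  rewrite (sumn_ext J _ (fun j => / INR n * sumn n (fun i => T i j * db j)))
    by (intros; rewrite Rmult_assoc, sumn_mulr; reflexivity).
  rewrite sumn_scal, <- (sumn_swap n J (fun i j => T i j * db j)).
  rewrite (sumn_ext p _
             (fun l => / INR n * sumn J (fun j => sumn n (fun i => T i j * x i l * dW l j))))
    by (intros; rewrite <- sumn_scal; apply sumn_ext; intros;
        rewrite Rmult_assoc, sumn_mulr; reflexivity).
  rewrite sumn_scal, (sumn_swap p J (fun l j => sumn n (fun i => T i j * x i l * dW l j))).
  rewrite (sumn_ext J _ (fun j => sumn n (fun i => T i j * sumn p (fun l => x i l * dW l j))))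
    by (intros; rewrite <- sumn_transpose; apply sumn_ext; intros; symmetry; apply sumn_mulr).
  rewrite <- (sumn_swap n J (fun i j => T i j * sumn p (fun l => x i l * dW l j))).
  rewrite <- Rmult_plus_distr_l, <- sumn_add. f_equal. apply sumn_ext. intros.
  rewrite <- sumn_add. apply sumn_ext. intros. ring.
Qed.

Lemma mip_grad_M n p J delta x y h d :
  mip p J (grad_M n p J delta x y h) d =
  / INR n * sumn n (fun i => sumn J (fun j => aij y i j * dphiH delta (mscore p x h i j) *
                             (fst d j + sumn p (fun l => x i l * snd d l j)))).
Proof. exact (sumn_score_adjoint n p J _ x (fst d) (snd d)). Qed.

Lemma ellM_convex n p J delta x y a h : (1 <= n)%nat -> 0 < delta ->
  ellM n p J delta x y h + mip p J (grad_M n p J delta x y h) (msub a h) <= ellM n p J delta x y a.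
Proof.
  intros Hn Hd. rewrite mip_grad_M. unfold ellM.
  rewrite <- Rmult_plus_distr_l, <- sumn_add.
  apply Rmult_le_compat_l; [apply Rlt_le, Rinv_0_lt_compat, lt_0_INR; lia|].
  apply sumn_le. intros i _. rewrite <- sumn_add. apply sumn_le. intros j _.
  assert (Ha : 0 <= aij y i j) by (unfold aij; destruct (Nat.eqb (y i) j); lra).
  pose proof (phiH_convex delta (mscore p x a i j) (mscore p x h i j) Hd).
  replace (fst (msub a h) j + sumn p (fun l => x i l * snd (msub a h) l j))
    with (mscore p x a i j - mscore p x h i j).
  2:{ unfold mscore. simpl.
      rewrite (sumn_ext p (fun l => x i l * (snd a l j - snd h l j))
                 (fun l => x i l * snd a l j - x i l * snd h l j)) by (intros; ring).
      rewrite sumn_sub. ring. }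
  nra.
Qed.

Lemma inU_convex p J : convex_set msub madd mscal (inU p J).
Proof.
  intros z a t [Hz1 Hz2] [Ha1 Ha2] _. unfold inU, seg, madd, mscal, msub; simpl. split.
  - intros l Hl. rewrite sumn_add, sumn_scal, sumn_sub, Hz1, Ha1 by exact Hl. ring.
  - rewrite sumn_add, sumn_scal, sumn_sub, Hz2, Ha2. ring.
Qed.

Lemma GM_strong_subgradients p J lam1 lam2 lam3 mu C : 0 <= lam1 -> mu <= lam2 -> mu <= lam3 ->
  has_strong_subgradients msub (mip p J) C (GM p J lam1 lam2 lam3) mu.
Proof.
  intros H1 H2 H3 v _.
  exists (fun j => lam3 * fst v j, fun l j => lam1 * Rsgn (snd v l j) + lam2 * snd v l j).
  intros a _.
  assert (HW : 0 <= sumn p (fun l => sumn J (fun j =>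
      lam1 * Rabs (snd a l j) + lam2 / 2 * snd a l j ^ 2
      - ((lam1 * Rabs (snd v l j) + lam2 / 2 * snd v l j ^ 2)
         + (lam1 * Rsgn (snd v l j) + lam2 * snd v l j) * (snd a l j - snd v l j)
         + mu / 2 * ((snd a l j - snd v l j) * (snd a l j - snd v l j)))))).
  { apply sumn2_nonneg. intros l j.
    pose proof (elastic_net_strong_subgradient lam1 lam2 mu (snd v l j) (snd a l j) H1 H2).
    lra. }
  assert (Hb : 0 <= sumn J (fun j =>
      lam3 / 2 * (fst a j * fst a j)
      - ((lam3 / 2 * (fst v j * fst v j)) + lam3 * fst v j * (fst a j - fst v j)
         + mu / 2 * ((fst a j - fst v j) * (fst a j - fst v j))))).
  { apply sumn_nonneg. intros j _.
    pose proof (elastic_net_strong_subgradient 0 lam3 mu (fst v j) (fst a j) (Rle_refl 0) H3).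
    lra. }
  repeat rewrite ?sumn2_sub, ?sumn2_add, ?sumn2_scal in HW.
  repeat rewrite ?sumn_sub, ?sumn_add, ?sumn_scal in Hb.
  unfold sqdist, mip, GM, dot, msub; cbn [fst snd]. lra.
Qed.

Lemma FM_nonneg n p J delta x y lam1 lam2 lam3 a :
  (1 <= n)%nat -> 0 < delta -> 0 <= lam1 -> 0 < lam2 -> 0 < lam3 ->
  0 <= FM n p J delta x y lam1 lam2 lam3 a.
Proof.
  intros Hn Hd H1 H2 H3. unfold FM, ellM, GM.
  assert (0 <= sumn n (fun i => sumn J (fun j => aij y i j * phiH delta (mscore p x a i j)))).
  { apply sumn2_nonneg. intros i j. apply Rmult_le_pos; [|apply phiH_nonneg; exact Hd].
    unfold aij. destruct (Nat.eqb (y i) j); lra. }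
  pose proof (sumn2_nonneg p J (fun l j => Rabs (snd a l j)) (fun l j => Rabs_pos _)).
  pose proof (sumn2_nonneg p J (fun l j => snd a l j ^ 2) (fun l j => pow2_ge_0 _)).
  pose proof (dot_self_ge0 J (fst a)).
  assert (0 < / INR n) by (apply Rinv_0_lt_compat, lt_0_INR; lia).
  assert (0 <= / INR n *
                 sumn n (fun i => sumn J (fun j => aij y i j * phiH delta (mscore p x a i j))))
    by (apply Rmult_le_pos; lra).
  assert (0 <= lam1 * sumn p (fun l => sumn J (fun j => Rabs (snd a l j))))
    by (apply Rmult_le_pos; lra).
  nra.
Qed.

Lemma mip_coord_le p J (d : mstate) :
  (forall j, (j < J)%nat -> fst d j * fst d j <= mip p J d d) /\
  (forall l j, (l < p)%nat -> (j < J)%nat -> snd d l j * snd d l j <= mip p J d d).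
Proof.
  pose proof (dot_self_ge0 J (fst d)) as Hb.
  pose proof (sumn2_nonneg p J (fun l j => snd d l j * snd d l j) (fun l j => Rle_0_sqr _)) as HW.
  unfold mip, dot in *. split.
  - intros j Hj.
    pose proof (sumn_term_le J (fun j => fst d j * fst d j) j (fun j _ => Rle_0_sqr _) Hj).
    cbv beta in *. lra.
  - intros l j Hl Hj.
    pose proof (sumn_term_le J (fun j => snd d l j * snd d l j) j (fun j _ => Rle_0_sqr _) Hj).
    pose proof (sumn_term_le p (fun l => sumn J (fun j => snd d l j * snd d l j)) l
                  (fun l _ => sumn_nonneg J _ (fun j _ => Rle_0_sqr _)) Hl).
    cbv beta in *. lra.
Qed.

Lemma mip_geometrically_complete p J : geometrically_complete msub (mip p J) (inU p J).
Proof.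
  intros v K tau HK Htau HU Hv.
  destruct (geometric_cauchy_limit_on (fun j => Nat.ltb j J) (fun k => fst (v k)) K tau HK Htau)
    as [lb Hlb].
  { intros j Hj k m Hkm. apply Nat.ltb_lt in Hj.
    eapply Rle_trans; [apply (mip_coord_le p J (msub (v k) (v m))), Hj | apply Hv, Hkm]. }
  destruct (geometric_cauchy_limit_on (fun lj => andb (Nat.ltb (fst lj) p) (Nat.ltb (snd lj) J))
              (fun k lj => snd (v k) (fst lj) (snd lj)) K tau HK Htau) as [lW HlW].
  { intros [l j] Hlj k m Hkm. apply Bool.andb_true_iff in Hlj as [Hl Hj].
    apply Nat.ltb_lt in Hl, Hj.
    eapply Rle_trans; [apply (mip_coord_le p J (msub (v k) (v m))); assumption | apply Hv, Hkm]. }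
  assert (Hlb' : forall k j, (j < J)%nat ->
            (fst (v k) j - lb j) * (fst (v k) j - lb j) <= K * tau ^ k)
    by (intros k j Hj; apply Hlb; now apply Nat.ltb_lt).
  assert (HlW' : forall k l j, (l < p)%nat -> (j < J)%nat ->
            (snd (v k) l j - lW (l, j)) * (snd (v k) l j - lW (l, j)) <= K * tau ^ k).
  { intros k l j Hl Hj. apply (HlW (l, j)). simpl. apply Bool.andb_true_iff.
    split; now apply Nat.ltb_lt. }
  exists (lb, fun l j => lW (l, j)), ((INR J + INR p * INR J) * K). split.
  - split.
    + intros l Hl.
      apply (sumn_zero_of_geometric_limit J _ (fun k j => snd (v k) l j) K tau HK Htau).
      * intros k. apply (HU k), Hl.
      * intros k j Hj. apply HlW'; assumption.
    + apply (sumn_zero_of_geometric_limit J _ (fun k j => fst (v k) j) K tau HK Htau).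
      * intros k. apply (HU k).
      * exact Hlb'.
  - intros k. unfold sqdist, mip, msub, dot; cbn [fst snd].
    assert (sumn J (fun j => (fst (v k) j - lb j) * (fst (v k) j - lb j))
            <= sumn J (fun _ => K * tau ^ k)) by (apply sumn_le; intros; apply Hlb'; assumption).
    assert (sumn p (fun l => sumn J (fun j =>
              (snd (v k) l j - lW (l, j)) * (snd (v k) l j - lW (l, j))))
            <= sumn p (fun _ => sumn J (fun _ => K * tau ^ k))).
    { apply sumn_le. intros l Hl. apply sumn_le. intros j Hj. apply HlW'; assumption. }
    rewrite !sumn_const in *. lra.
Qed.

Lemma mpgh_R_linear_convergence (n p J : nat) (x : nat -> vec) (y : nat -> nat)
    (lam1 lam2 lam3 delta eta : R) (U : nat -> mstate) (L om : nat -> R) :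
  (1 <= n)%nat -> 0 <= lam1 -> 0 < lam2 -> 0 < lam3 -> 0 < delta -> 1 < eta ->
  0 < L 0%nat -> L 0%nat <= Lm n p J delta x -> inU p J (U 0%nat) ->
  (forall k : nat,
     pgh_step msub madd mscal (mip p J) (ellM n p J delta x y)
       (grad_M n p J delta x y) (FM n p J delta x y lam1 lam2 lam3)
       (prox_M n p J delta x y lam1 lam2 lam3) eta (Lm n p J delta x)
       (L k) (U (Nat.pred k)) (U k) (om k) (L (S k)) (U (S k))) ->
  Rlinear_to_unique_min msub (mip p J) (FM n p J delta x y lam1 lam2 lam3) (inU p J) U.
Proof.
  intros Hn H1 H2 H3 Hd Heta HL0 HLmax HU0 Hstep.
  pose proof (Rmin_l lam2 lam3). pose proof (Rmin_r lam2 lam3).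
  assert (Hmu : 0 < Rmin lam2 lam3) by (apply Rmin_glb_lt; assumption).
  apply (pgh_R_linear_convergence msub madd mscal (mip p J) (ellM n p J delta x y)
    (GM p J lam1 lam2 lam3) _ (grad_M n p J delta x y) (prox_M n p J delta x y lam1 lam2 lam3)
    (inU p J) (Rmin lam2 lam3) eta (Lm n p J delta x)) with (L := L) (om := om); auto.
  - intros a h. apply ellM_convex; assumption.
  - apply inU_convex.
  - apply GM_strong_subgradients; assumption.
  - intros L' h z _ [Hz Hmin]. split; [exact Hz|].
    apply (prox_model_three_point msub madd mscal (mip p J) (inU p J)); try assumption.
    + apply inU_convex.
    + apply GM_strong_subgradients; assumption.
  - exists 0. intros a _. apply FM_nonneg; assumption.
  - apply mip_geometrically_complete.
Qed.

Theorem corollary1 :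
  (forall (n p : nat) (x : nat -> vec) (y : nat -> R)
          (lam1 lam2 lam3 delta eta : R)
          (u : nat -> bstate) (L om : nat -> R),
     (1 <= n)%nat ->
     (forall i, (i < n)%nat -> y i = 1 \/ y i = -1) ->
     0 <= lam1 -> 0 < lam2 -> 0 < lam3 -> 0 < delta -> 1 < eta ->
     0 < L 0%nat -> L 0%nat <= Lf_bin n p delta x y ->
     (forall k : nat,
        pgh_step bsub badd bscal (bip p) (f_bin n p delta x y)
          (grad_bin n p delta x y) (F_bin n p delta x y lam1 lam2 lam3)
          (prox_bin n p delta x y lam1 lam2 lam3) eta (Lf_bin n p delta x y)
          (L k) (u (Nat.pred k)) (u k) (om k) (L (S k)) (u (S k))) ->
     Rlinear_to_unique_min bsub (bip p) (F_bin n p delta x y lam1 lam2 lam3)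
       (fun _ => True) u)
  /\
  (forall (n p J : nat) (x : nat -> vec) (y : nat -> nat)
          (lam1 lam2 lam3 delta eta : R)
          (U : nat -> mstate) (L om : nat -> R),
     (1 <= n)%nat ->
     (forall i, (i < n)%nat -> (y i < J)%nat) ->
     0 <= lam1 -> 0 < lam2 -> 0 < lam3 -> 0 < delta -> 1 < eta ->
     0 < L 0%nat -> L 0%nat <= Lm n p J delta x ->
     inU p J (U 0%nat) ->
     (forall k : nat,
        pgh_step msub madd mscal (mip p J) (ellM n p J delta x y)
          (grad_M n p J delta x y) (FM n p J delta x y lam1 lam2 lam3)
          (prox_M n p J delta x y lam1 lam2 lam3) eta (Lm n p J delta x)
          (L k) (U (Nat.pred k)) (U k) (om k) (L (S k)) (U (S k))) ->
     Rlinear_to_unique_min msub (mip p J) (FM n p J delta x y lam1 lam2 lam3)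
       (inU p J) U).
Proof.
  (* Neither the label constraints nor the values of [Lf_bin], [Lm] (only caps on [L k])
     are needed. *)
  split.
  - intros n p x y lam1 lam2 lam3 delta eta u L om Hn _.
    apply bpgh_R_linear_convergence; assumption.
  - intros n p J x y lam1 lam2 lam3 delta eta U L om Hn _.
    apply mpgh_R_linear_convergence; assumption.
Qed.
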